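(* Uniformly in $0<\alpha<1/2$, for all $u\ge2$, \[\sqrt{Y_1}=u^{1/(2\alpha)}+O\Bigl(\frac1{u^2}\Bigr),\] where $Y_1=Y_1(u,\alpha)$ is the unique positive solution $Y$ of $u=Y^\alpha-Y^{-1-\alpha}$. *)

From Stdlib Require Export Reals.
Open Scope R_scope.

Definition is_Y1 (u alpha Y : R) : Prop :=
  0 < Y /\ u = Rpower Y alpha - Rpower Y (-1 - alpha).

(** With [L = ln Y], [sqrt Y = exp (L/2)] and [u^(1/(2 alpha)) = exp (ln u / (2 alpha))].
    Since [Y^alpha = u + Y^(-1-alpha)], the exponents differ by
    [(alpha L - ln u) / (2 alpha) <= Y^(-1-alpha) / (2 alpha u)], and [e^x - e^y <= e^x (x - y)]
    together with [Y^(-1-alpha) = 1 / (Y Y^alpha)] and [Y^alpha > u] turns this into [0 <= sqrt Y - u^(1/(2 alpha)) <= 1 / (2 alpha sqrt Y u^2)].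
    Finally [2 alpha sqrt Y >= alpha L > ln u >= ln 2 > 1/2], which gives the constant [2]. *)

From Stdlib Require Import Reals Lra.
Open Scope R_scope.

Lemma ln_1p_le t : -1 < t -> ln (1 + t) <= t.
Proof.
  intros Ht; pose proof (exp_ineq1_le (ln (1 + t))) as H.
  rewrite exp_ln in H by lra; lra.
Qed.

Lemma exp_sub_exp_le x y : exp x - exp y <= exp x * (x - y).
Proof.
  assert (H : exp x * (1 + (y - x)) <= exp x * exp (y - x)).
  { apply Rmult_le_compat_l; [left; apply exp_pos | apply exp_ineq1_le]. }
  rewrite <- exp_plus in H; replace (x + (y - x)) with y in H by ring; lra.
Qed.

Lemma Rpower_m1_sub x a : 0 < x -> Rpower x (-1 - a) = / (x * Rpower x a).
Proof.
  intros Hx; replace (-1 - a) with (- (1 + a)) by ring.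
  now rewrite Rpower_Ropp, Rpower_plus, Rpower_1.
Qed.

Lemma sqrt_exp_ln x : 0 < x -> sqrt x = exp (ln x / 2).
Proof.
  intros Hx; rewrite <- Rpower_sqrt by exact Hx; unfold Rpower; f_equal; field.
Qed.

Lemma inv2_lt_ln x : 2 <= x -> / 2 < ln x.
Proof.
  intros Hx; pose proof ln_lt_2 as H2.
  destruct (Req_dec x 2) as [-> | Hne]; [exact H2|].
  assert (ln 2 < ln x) by (apply ln_increasing; lra); lra.
Qed.

Section Y1.

Variables alpha u Y : R.
Hypothesis alpha_pos : 0 < alpha.
Hypothesis u_pos : 0 < u.
Hypothesis Y_pos : 0 < Y.
Hypothesis u_def : u = Rpower Y alpha - Rpower Y (-1 - alpha).

Lemma Y1_Rpower_gt : u < Rpower Y alpha.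
Proof. pose proof (exp_pos ((-1 - alpha) * ln Y)); unfold Rpower in *; lra. Qed.

Lemma Y1_ln_lt : ln u < alpha * ln Y.
Proof. rewrite <- ln_Rpower; exact (ln_increasing _ _ u_pos Y1_Rpower_gt). Qed.

Lemma Y1_ln_gap_le : alpha * ln Y - ln u <= Rpower Y (-1 - alpha) / u.
Proof.
  set (D := Rpower Y (-1 - alpha)) in *.
  assert (HD : 0 < D / u) by (apply Rdiv_lt_0_compat; [apply exp_pos | exact u_pos]).
  assert (Hsplit : Rpower Y alpha = u * (1 + D / u)).
  { replace (u * (1 + D / u)) with (u + D) by (field; lra); lra. }
  rewrite <- ln_Rpower, Hsplit, ln_mult by lra.
  pose proof (ln_1p_le (D / u)); lra.
Qed.

Lemma Y1_Rpower_le_sqrt : Rpower u (1 / (2 * alpha)) <= sqrt Y.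
Proof.
  rewrite sqrt_exp_ln by exact Y_pos; unfold Rpower; left; apply exp_increasing.
  pose proof Y1_ln_lt.
  apply Rmult_lt_reg_l with (2 * alpha); [lra|]; field_simplify; lra.
Qed.

Lemma Y1_sqrt_sub_le :
  sqrt Y - Rpower u (1 / (2 * alpha)) <= / (2 * alpha * sqrt Y * u ^ 2).
Proof.
  set (s := sqrt Y); set (P := Rpower Y alpha).
  assert (Hs : 0 < s) by (apply sqrt_lt_R0; exact Y_pos).
  assert (Hss : s * s = Y) by (apply sqrt_sqrt; lra).
  assert (HuP : u < P) by exact Y1_Rpower_gt.
  assert (Hexp : s - Rpower u (1 / (2 * alpha))
                 <= s * ((alpha * ln Y - ln u) / (2 * alpha))).
  { unfold s; rewrite sqrt_exp_ln by exact Y_pos; unfold Rpower.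
    replace ((alpha * ln Y - ln u) / (2 * alpha))
      with (ln Y / 2 - 1 / (2 * alpha) * ln u) by (field; lra).
    apply exp_sub_exp_le. }
  assert (Hgap : s * ((alpha * ln Y - ln u) / (2 * alpha))
                 <= s * (Rpower Y (-1 - alpha) / u / (2 * alpha))).
  { apply Rmult_le_compat_l; [lra|].
    unfold Rdiv; apply Rmult_le_compat_r; [left; apply Rinv_0_lt_compat; lra|].
    exact Y1_ln_gap_le. }
  assert (Hval : s * (Rpower Y (-1 - alpha) / u / (2 * alpha))
                 = / (2 * alpha * s * u * P)).
  { rewrite Rpower_m1_sub by exact Y_pos; fold P; rewrite <- Hss.
    field; repeat split; lra. }
  assert (Hinv : / (2 * alpha * s * u * P) <= / (2 * alpha * s * u ^ 2)).
  { apply Rinv_le_contravar; [repeat apply Rmult_lt_0_compat; lra|].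
    assert (0 < 2 * alpha * s * u) by (repeat apply Rmult_lt_0_compat; lra).
    nra. }
  lra.
Qed.

Lemma Y1_ln_lt_sqrt : ln u < 2 * alpha * sqrt Y.
Proof.
  rewrite sqrt_exp_ln by exact Y_pos.
  assert (H : alpha * (1 + ln Y / 2) <= alpha * exp (ln Y / 2))
    by (apply Rmult_le_compat_l; [lra | apply exp_ineq1_le]).
  pose proof Y1_ln_lt; lra.
Qed.

End Y1.

Theorem lemma14 :
  exists C : R, 0 < C /\
    forall alpha u Y : R,
      0 < alpha < 1/2 -> 2 <= u -> is_Y1 u alpha Y ->
      Rabs (sqrt Y - Rpower u (1 / (2 * alpha))) <= C / u ^ 2.
Proof.
  exists 2; split; [lra|].
  intros alpha u Y [Ha _] Hu [HY Hdef].
  assert (Hu0 : 0 < u) by lra.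
  rewrite Rabs_pos_eq
    by (pose proof (Y1_Rpower_le_sqrt alpha u Y Ha Hu0 HY Hdef); lra).
  eapply Rle_trans; [exact (Y1_sqrt_sub_le alpha u Y Ha Hu0 HY Hdef)|].
  assert (Hlarge : / 2 < 2 * alpha * sqrt Y).
  { pose proof (inv2_lt_ln u Hu); pose proof (Y1_ln_lt_sqrt alpha u Y Ha Hu0 HY Hdef); lra. }
  replace (2 / u ^ 2) with (/ (/ 2 * u ^ 2)) by (field; lra).
  apply Rinv_le_contravar; [apply Rmult_lt_0_compat; [lra | apply pow_lt; lra]|].
  apply Rmult_le_compat_r; [apply pow_le; lra | lra].
Qed.
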